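(* Let $a=1$. Define $\boldsymbol{\alpha}_0=\boldsymbol{\beta}_0=1$ and, for $n\ge1$, \[ \boldsymbol{\alpha}_n(1,k)=(-1)^n q^{-n^2/2}\left(q^{-3n/2}+q^{3n/2}\right),\qquad \boldsymbol{\beta}_n(1,k)=\frac{(-1)^n(1-kq^n+kq^{2n})(k;q)_{n}}{q^{(n^2+3n)/2}(q;q)_n}. \] Then $(\boldsymbol{\alpha}_n(1,k),\boldsymbol{\beta}_n(1,k))$ is a WP-Bailey pair relative to $a=1$.
   Context: Notation: $(x;q)_n=\prod_{i=0}^{n-1}(1-xq^i)$. A pair of sequences $(\boldsymbol{\alpha}_n(a,k,q),\boldsymbol{\beta}_n(a,k,q))_{n\ge0}$ is a WP-Bailey pair (relative to $a$, with parameter $k$) if $\boldsymbol{\alpha}_0=1$ and for all $n\ge0$ \[\boldsymbol{\beta}_n=\sum_{j=0}^n\frac{(k/a;q)_{n-j}(k;q)_{n+j}}{(q;q)_{n-j}(aq;q)_{n+j}}\boldsymbol{\alpha}_j.\] *)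

From HB Require Import structures.
From mathcomp Require Import all_boot all_order all_algebra.
Set Implicit Arguments. Unset Strict Implicit. Unset Printing Implicit Defensive.
Import Order.TTheory GRing.Theory Num.Theory.
Local Open Scope ring_scope.

Definition qpoch (R : pzRingType) (x q : R) (n : nat) : R :=
  \prod_(i < n) (1 - x * q ^+ i).

Definition WP_Bailey_pair (R : fieldType) (a k q : R) (alpha beta : nat -> R) : Prop :=
  alpha 0%N = 1 /\
  forall n : nat,
    beta n = \sum_(j < n.+1)
      (qpoch (k / a) q (n - j) * qpoch k q (n + j))
      / (qpoch q q (n - j) * qpoch (a * q) q (n + j)) * alpha j.

(* The exponent (n^2 + 3n)/2, always an integer. *)
Definition e7 (n : nat) : nat := (n * n + 3 * n)./2.

(* alpha_n(1,k) = (-1)^n q^{-n^2/2} (q^{-3n/2} + q^{3n/2})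
               = (-1)^n (q^{-(n^2+3n)/2} + q^{3n - (n^2+3n)/2}). *)
Definition alpha7 (R : fieldType) (q : R) (n : nat) : R :=
  if n == 0%N then 1 else
  (-1) ^+ n * (q ^ (- (e7 n)%:Z) + q ^ ((3 * n)%:Z - (e7 n)%:Z)).

Definition beta7 (R : fieldType) (k q : R) (n : nat) : R :=
  if n == 0%N then 1 else
  (-1) ^+ n * (1 - k * q ^+ n + k * q ^+ (2 * n)) * qpoch k q n
    / (q ^+ e7 n * qpoch q q n).

(* Put r m = (k;q)_m / (q;q)_m and w d = (-1)^d q^(-d(d+1)/2).  The sum defining
   beta_(n+1) folds around its middle term into the convolution
   C(2n+2, n) = \sum_i r(2n+2-i) r(i) w(i-n): the terms i = n+1+j and
   i = n+1-j produce the two parts of alpha_j.  The identity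
   r(e+1)(1 - q^(e+1)) = r(e)(1 - k q^e) and w(d+1) = -q^(-d-1) w(d) give a
   recurrence for C(M, n) in both indices, and w(-1-d) = -w(d) makes C(M, n)
   antisymmetric under n |-> M+1-n.  These determine the diagonal C(2n, n)
   in closed form, and from it C(2n+2, n) = -beta_(n+1)/q. *)

From mathcomp Require Import all_boot all_order all_algebra.
From mathcomp Require Import ring zify.
Import GRing.Theory.
Local Open Scope ring_scope.

Definition tri (n : nat) : nat := 'C(n.+1, 2).
Arguments tri : simpl never.

Lemma triS n : tri n.+1 = (tri n + n.+1)%N.
Proof. by rewrite /tri binS bin1 addnC. Qed.

Lemma tri_double n : (2 * tri n = n * n.+1)%N.
Proof. by elim: n => [|n IHn] //; rewrite triS; lia. Qed.

Lemma e7_tri n : e7 n = (tri n + n)%N.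
Proof.
rewrite /e7 -[(tri n + n)%N]doubleK -mul2n; congr (_./2).
by move: (tri_double n); lia.
Qed.

Section Folding.
Variable V : zmodType.
Implicit Type g : nat -> V.

Lemma sum_fold_pairs g N :
  \sum_(0 <= i < N + N) g i = \sum_(0 <= i < N) (g i + g ((N + N).-1 - i)%N).
Proof.
rewrite big_split (big_cat_nat _ (n := N)) ?leq_addr //=; congr (_ + _).
rewrite -{1}[N]add0n big_addn addnK big_nat_rev /=.
by apply: eq_big_nat => i /andP[_ ltiN]; congr g; lia.
Qed.

Lemma sum_fold_center g N :
  \sum_(0 <= i < (N + N).+1) g i
    = g N + \sum_(0 <= j < N) (g (N + j.+1)%N + g (N - j.+1)%N).
Proof.
rewrite (big_cat_nat _ (n := N)) //=; last lia.
rewrite big_nat_recl ?leq_addr // addrCA big_split /=; congr (_ + _).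
rewrite addrC; congr (_ + _).
  rewrite (big_addn 0 _ N) addnK; apply: eq_big_nat => j _; congr g; lia.
rewrite big_nat_rev /=; apply: eq_big_nat => j /andP[_ ltjN]; congr g; lia.
Qed.

End Folding.

Lemma qpochS (R : pzRingType) (x q : R) n :
  qpoch x q n.+1 = qpoch x q n * (1 - x * q ^+ n).
Proof. by rewrite /qpoch big_ord_recr. Qed.

Section WPBaileyPair.
Variables (R : fieldType) (k q : R).
Hypothesis q_neq0 : q != 0.
Hypothesis qX_neq1 : forall m : nat, (0 < m)%N -> q ^+ m != 1.

Lemma subr1qX_neq0 m : 1 - q ^+ m.+1 != 0.
Proof. by rewrite subr_eq0 eq_sym qX_neq1. Qed.

Lemma qpoch_qq_neq0 m : qpoch q q m != 0.
Proof. by apply/prodf_neq0 => i _; rewrite -exprS subr1qX_neq0. Qed.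

Definition ratio m := qpoch k q m / qpoch q q m.

Lemma ratio0 : ratio 0 = 1.
Proof. by rewrite /ratio /qpoch !big_ord0 divr1. Qed.

Lemma ratioS_sub m :
  ratio m.+1 - ratio m = ratio m.+1 * q ^+ m.+1 - k * ratio m * q ^+ m.
Proof.
have := qpoch_qq_neq0 m; have := subr1qX_neq0 m.
rewrite /ratio !qpochS exprS => ? ?; field; exact/andP.
Qed.

(* w (i - n) in the notation above, avoiding integer halving. *)
Definition weight (n i : nat) : R :=
  (-1) ^+ (i + n) * q ^ ((n * i.+1)%N%:Z - (tri i + tri n)%N%:Z).

Lemma weightS n i : weight n.+1 i = - q ^ (i%:Z - n%:Z) * weight n i.
Proof.
rewrite /weight addnS exprS triS mulN1r !mulNr mulrCA -expfzDr //.
by congr (- (_ * q ^ _)); lia.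
Qed.

Lemma weight_antisym m n a b : (a + b).+1 = (m + n)%N -> weight n a = - weight m b.
Proof.
move=> abmn; rewrite /weight -mulNr.
have -> : (-1) ^+ (a + n) = - (-1) ^+ (b + m) :> R.
  rewrite -[RHS]mulN1r -exprS -(signr_odd _ (a + n)) -(signr_odd _ (b + m).+1).
  by congr ((-1) ^+ nat_of_bool _); lia.
congr (_ * q ^ _).
by have:= tri_double a; have:= tri_double b; have:= tri_double m; have:= tri_double n; nia.
Qed.

Lemma exprn_weightS a b n i :
  (a + i = b + n)%N -> q ^+ a * weight n.+1 i = - (q ^+ b * weight n i).
Proof.
move=> abin; rewrite weightS mulNr mulrN mulrA !exprnP -expfzDr //.
by congr (- (q ^ _ * _)); lia.
Qed.

Lemma neg_q_weight n i : - q * weight n i =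
  (-1) ^+ (i + n).+1 * q ^ (1 + (n * i.+1)%N%:Z - (tri i + tri n)%N%:Z).
Proof. by rewrite /weight -addrA [in RHS]expfzDr // expr1z exprS; ring. Qed.

Lemma neg_q_weight_center n : - q * weight n n.+1 = 1.
Proof.
rewrite neg_q_weight -signr_odd.
have -> : odd (n.+1 + n).+1 = false by lia.
set e := (X in q ^ X); have -> : e = 0.
  by rewrite /e; have:= tri_double n; have:= tri_double n.+1; lia.
by rewrite expr0z mulr1.
Qed.

Lemma alpha7_weight n j : (j <= n)%N ->
  alpha7 q j.+1 = - q * (weight n (n.+2 + j) + weight n (n - j)).
Proof.
move=> jn; rewrite mulrDr !neg_q_weight /alpha7 e7_tri /= mulrDr.
rewrite -(subnK jn); set d := (n - j)%N; rewrite addnK.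
have:= tri_double j.+1; have:= tri_double d; have:= tri_double (d + j).
have:= tri_double ((d + j).+2 + j) => ? ? ? ?.
congr (_ + _); rewrite -[in LHS]signr_odd -[in RHS]signr_odd;
  by congr ((-1) ^+ nat_of_bool _ * q ^ _); lia.
Qed.

Definition conv M n := \sum_(0 <= i < M.+1) ratio (M - i) * ratio i * weight n i.

Lemma conv_antisym M n n' : (n + n' = M.+1)%N -> conv M n = - conv M n'.
Proof.
move=> nn'M; rewrite /conv big_nat_rev -sumrN; apply: eq_big_nat => i /andP[_ ltiM].
rewrite add0n subSS subKn // (weight_antisym n' _ _ i); first by ring.
by rewrite subnK // addnC.
Qed.

(* By pairing i with 2m+1-i: conv_antisym alone only gives 2 x = 0. *)
Lemma conv_mid m : conv (m + m).+1 m.+1 = 0.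
Proof.
rewrite /conv -addnS -addSn sum_fold_pairs big_nat big1 // => i /andP[_ ltim].
rewrite addSn /= subKn; last lia.
rewrite (weight_antisym m.+1 m.+1 (m + m.+1 - i) i); first by ring.
by rewrite subnK; lia.
Qed.

Lemma conv_step M n : (n <= M)%N ->
  conv M.+1 n.+1 - conv M n.+1
    = - q ^+ (M.+1 - n) * conv M.+1 n + k * q ^+ (M - n) * conv M n.
Proof.
move=> nM; rewrite /conv (big_nat_recr M.+1) //.
rewrite [in X in _ = - _ * X + _](big_nat_recr M.+1) //= addrAC subnn.
rewrite -sumrB mulrDr !mulr_sumr [RHS]addrAC -big_split /=; congr (_ + _).
  apply: eq_big_nat => i /andP[_ ltiM]; rewrite -!mulrBl subSn // ratioS_sub.
  set e := (M - i)%N.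
  have shiftS : q ^+ e.+1 * weight n.+1 i = - (q ^+ (M.+1 - n) * weight n i).
    by apply: exprn_weightS; lia.
  have shift : q ^+ e * weight n.+1 i = - (q ^+ (M - n) * weight n i).
    by apply: exprn_weightS; lia.
  transitivity (ratio e.+1 * ratio i * (q ^+ e.+1 * weight n.+1 i)
    - k * ratio e * ratio i * (q ^+ e * weight n.+1 i)); first by ring.
  by rewrite shiftS shift; ring.
have shift0 : q ^+ 0 * weight n.+1 M.+1 = - (q ^+ (M.+1 - n) * weight n M.+1).
  by apply: exprn_weightS; lia.
by rewrite expr0 mul1r in shift0; rewrite shift0; ring.
Qed.

Lemma conv_odd n : conv (n + n).+1 n = (1 - q ^+ n.+1) * conv (n.+1 + n.+1) n.+1.
Proof.
have := conv_step (n + n).+1 n.+1 (leq_addl _ _).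
rewrite conv_mid mulr0 addr0 (conv_antisym _ n.+2 n.+1); last lia.
rewrite (conv_antisym _ n.+2 n); last lia.
rewrite opprK (_ : ((n + n).+2 - n.+1 = n.+1)%N); last lia.
rewrite addSn addnS => step; apply: (addrI (- conv (n + n).+2 n.+1)).
by rewrite step; ring.
Qed.

Lemma conv_diagS n : (1 - k * q ^+ n) * conv (n + n) n
  = - q ^+ n.+1 * (1 - q ^+ n.+1) * conv (n.+1 + n.+1) n.+1.
Proof.
have := conv_step (n + n) n (leq_addr _ _).
rewrite conv_odd conv_mid (conv_antisym _ n.+1 n) ?addnS // sub0r opprK.
rewrite (_ : ((n + n).+1 - n = n.+1)%N) ?addnK; last lia.
by move=> step; rewrite mulrBl mul1r {1}step; ring.
Qed.

Lemma conv_diag n :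
  conv (n + n) n = (-1) ^+ n * qpoch k q n / (qpoch q q n * q ^+ tri n).
Proof.
elim: n => [|n IHn].
  by rewrite /conv big_nat1 ratio0 /weight /tri /qpoch !big_ord0 /= !mul1r invr1.
have qn_neq0 : q ^+ n.+1 != 0 by rewrite expf_neq0.
have := subr1qX_neq0 n; have := qpoch_qq_neq0 n; have : q ^+ tri n != 0 by rewrite expf_neq0.
move=> ? ? ?; apply: (@mulfI _ (- q ^+ n.+1 * (1 - q ^+ n.+1))).
  by rewrite mulf_neq0 ?oppr_eq0.
rewrite -conv_diagS IHn !qpochS -exprS triS exprD [(-1) ^+ n.+1]exprS.
by field; apply/and4P.
Qed.

Lemma conv_center n : - q * conv (n.+1 + n.+1) n
  = (1 - k * q ^+ n.+1 + k * q ^+ (2 * n.+1)) * conv (n.+1 + n.+1) n.+1 / q ^+ n.+1.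
Proof.
have := conv_step (n + n).+1 n (leqW (leq_addl _ _)).
rewrite conv_mid subr0 conv_odd addSn addnS.
rewrite (_ : ((n + n).+2 - n = n.+2)%N); last lia.
rewrite (_ : ((n + n).+1 - n = n.+1)%N); last lia.
move=> step; have qn_neq0 : q ^+ n.+1 != 0 by rewrite expf_neq0.
have F_eq : - q ^+ n.+2 * conv (n + n).+2 n
    = conv (n + n).+2 n.+1 - k * q ^+ n.+1 * ((1 - q ^+ n.+1) * conv (n + n).+2 n.+1).
  by rewrite {1}step addrK.
apply: (mulIf qn_neq0); rewrite divfK //.
transitivity (- q ^+ n.+2 * conv (n + n).+2 n); first by rewrite [q ^+ n.+2]exprS; ring.
by rewrite F_eq mul2n -addnn exprD; ring.
Qed.

Lemma sum_alpha7_conv n :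
  \sum_(0 <= j < n.+2) ratio (n.+1 - j) * ratio (n.+1 + j) * alpha7 q j
    = - q * conv (n.+1 + n.+1) n.
Proof.
rewrite /conv sum_fold_center mulrDr mulr_sumr big_nat_recl //; congr (_ + _).
  by rewrite subn0 addn0 addnK [RHS]mulrCA neg_q_weight_center /alpha7.
apply: eq_big_nat => j /andP[_ ltjn]; rewrite (alpha7_weight n j ltjn).
rewrite (_ : (n.+1 + n.+1 - (n.+1 + j.+1) = n - j)%N); last lia.
rewrite (_ : (n.+1 + n.+1 - (n.+1 - j.+1) = n.+2 + j)%N); last lia.
by rewrite subSS addnS -addSn; ring.
Qed.

Lemma beta7_conv n : beta7 k q n.+1 = - q * conv (n.+1 + n.+1) n.
Proof.
rewrite conv_center conv_diag /beta7 e7_tri exprD /=.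
have := qpoch_qq_neq0 n.+1; have : q ^+ tri n.+1 != 0 by rewrite expf_neq0.
have : q ^+ n.+1 != 0 by rewrite expf_neq0.
by move=> ? ? ?; field; apply/and3P.
Qed.

End WPBaileyPair.

Theorem mainTheorem7 (R : fieldType) (k q : R)
  (hq0 : q != 0) (hq : forall m : nat, (0 < m)%N -> q ^+ m != 1) :
  WP_Bailey_pair 1 k q (alpha7 q) (beta7 k q).
Proof.
split=> // -[|n].
  by rewrite big_ord1 /qpoch !big_ord0 /beta7 /alpha7 /= !(mul1r, invr1).
rewrite beta7_conv // -sum_alpha7_conv // big_mkord.
by apply: eq_bigr => j _; rewrite /ratio divr1 mul1r mulf_div.
Qed.
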